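(* In the epoch setting described in the context, for each $i\in[\rho]$ and each $I\in\mathcal{I}$, there exists an agent in $A^{(i)}$ that visits every state of $I$ during the roundabout process of the $i$-th epoch (i.e., whose set of visited states after the $t$ steps of that process contains $I$).
   Context: Let $n\ge 2$ and $k\ge1$, $\Delta$ be natural numbers, $\mathcal{G}=\langle G_1,\dots,G_L\rangle$ a temporal graph (sequence of graphs on a common $n$-element vertex set $V$), and $T$ a spanning tree of its underlying graph (the union of the snapshots). A snapshot is $k$-edge-deficient w.r.t. $T$ if it contains all but at most $k$ edges of $T$. Let $N=2(n-1)$, fix a DFS tour of $T$ from a root $r$ traversing each edge twice, with cyclic vertex sequence $(v_1,\dots,v_{N+1})$, $v_{N+1}=v_1=r$, tour edges $e_q=\{v_q,v_{q+1}\}$. Circular intervals: $[\![i,j]\!]=\{i,\dots,j\}$ if $i\le j$, $\{i,\dots,N,1,\dots,j\}$ if $i>j$; $[\![i,j[\![=[\![i,j]\!]\setminus\{j\}$. Roundabout process on a sequence $H_1,\dots,H_t$ of graphs: agents $a_1,\dots,a_N$, $s_i(0)=i$; at step $\tau$, if $s_i(\tau-1)=q$ then $s_i(\tau)=(q\bmod N)+1$ if $e_q\in E(H_\tau)$, else $q$; visited states $D_i(\tau)=[\![i,s_i(\tau)]\!]$, $D_i(0)=\{i\}$; active sets $A(0)=$ all agents, and $A(\tau)$ is obtained from $A(\tau-1)$ by repeatedly removing an arbitrary agent $a_i$ with $D_i(\tau)\subseteq\bigcup D_j(\tau)$ over the other current agents, until none remains. Let $t=\lfloor N/(2k)\rfloor$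 and $\rho=\lceil 18k\ln(6k)\rceil$. Assume an initial part of $[L]$ is partitioned into $\rho$ consecutive intervals (epochs), each containing at least $\Delta+t$ snapshots that are $k$-edge-deficient w.r.t. $T$; each epoch's first $\Delta$ time steps form its repositioning part, and the rest (containing at least $t$ such snapshots) is its roundabout part. In epoch $i$, run the roundabout process for $t$ steps on the first $t$ $k$-edge-deficient snapshots of its roundabout part, let $A^{(i)}$ be the active agents after step $t$ and $S^{(i)}$ their initial states. Let $\bigcup_{i\in[\rho]}S^{(i)}=\{m_1<\dots<m_d\}$, $I_j=[\![m_j,m_{j+1}[\![$ for $j\in[d-1]$, $I_d=[\![m_d,m_1[\![$, and $\mathcal{I}=\{I_1,\dots,I_d\}$. *)

From Stdlib Require Rdefinitions Raxioms Rpower.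
From HB Require Import structures.
From mathcomp Require Import all_boot.

Set Implicit Arguments.
Unset Strict Implicit.
Unset Printing Implicit Defensive.

(* rho = ceil(18 k ln(6k)), stated as the defining property of the ceiling. *)
Definition is_rho (k rho : nat) : Prop :=
  let x := Rdefinitions.Rmult (Rdefinitions.Rmult (Raxioms.INR 18) (Raxioms.INR k))
             (Rpower.ln (Rdefinitions.Rmult (Raxioms.INR 6) (Raxioms.INR k))) in
  Rdefinitions.Rlt (Rdefinitions.Rminus (Raxioms.INR rho) (Raxioms.INR 1)) x /\
  Rdefinitions.Rle x (Raxioms.INR rho).

(* Circular intervals on the states {1,...,N}. *)
Definition cint (N i j : nat) : pred nat := fun x =>
  (1 <= x <= N) && (if i <= j then (i <= x <= j) else (i <= x) || (x <= j)).

Definition cinto (N i j : nat) : pred nat := fun x => cint N i j x && (x != j).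

Section Graphs.
Variable V : finType.

Definition is_graph_edges (E : {set {set V}}) : Prop :=
  forall e, e \in E -> #|e| = 2.

Definition underlying (G : nat -> {set {set V}}) (L : nat) : {set {set V}} :=
  \bigcup_(1 <= tau < L.+1) G tau.

Definition spanning_tree (U T : {set {set V}}) : Prop :=
  [/\ T \subset U,
      (forall x y : V, connect (fun a b => [set a; b] \in T) x y)
    & #|T| = #|V|.-1].

Definition tour_edge (v : nat -> V) (q : nat) : {set V} := [set v q; v q.+1].

Definition dfs_tour (T : {set {set V}}) (r : V) (v : nat -> V) (N : nat) : Prop :=
  [/\ v 1 = r, v N.+1 = r,
      (forall q, 1 <= q <= N -> tour_edge v q \in T)
    & (forall e, e \in T -> count (fun q => tour_edge v q == e) (iota 1 N) = 2)].

Definition deficient (T : {set {set V}}) (k : nat) (E : {set {set V}}) : bool :=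
  #|T :\: E| <= k.

Fixpoint rpos (N : nat) (e : nat -> {set V}) (H : nat -> {set {set V}})
    (i tau : nat) : nat :=
  match tau with
  | 0 => i
  | tau'.+1 => let q := rpos N e H i tau' in
               if e q \in H tau then q %% N + 1 else q
  end.

Definition visited N (e : nat -> {set V}) H (i tau : nat) : pred nat :=
  cint N i (rpos N e H i tau).
End Graphs.

Definition removable (D : nat -> pred nat) (A : pred nat) (a : nat) : Prop :=
  forall x, D a x -> exists j, A j /\ j <> a /\ D j x.

Inductive prune (D : nat -> pred nat) : pred nat -> pred nat -> Prop :=
| prune_stop (A B : pred nat) :
    (forall a, A a -> ~ removable D A a) -> (forall x, B x = A x) -> prune D A B
| prune_step (A B : pred nat) (a : nat) :
    A a -> removable D A a -> prune D (fun x => A x && (x != a)) B -> prune D A B.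

Definition roundabout_run (V : finType) (N : nat) (e : nat -> {set V})
    (H : nat -> {set {set V}}) (t : nat) (Aset : nat -> pred nat) : Prop :=
  (forall a, Aset 0 a = (1 <= a <= N)) /\
  (forall tau, 1 <= tau <= t ->
     prune (fun a => visited N e H a tau) (Aset tau.-1) (Aset tau)).

(* Epoch i (1 <= i <= rho) consists of time steps b(i-1)+1, ..., b(i);
   its repositioning part is the first Delta time steps, the rest is its
   roundabout part. *)
Definition epoch_times (b : nat -> nat) (i : nat) : seq nat :=
  iota (b i.-1).+1 (b i - b i.-1).

Definition roundabout_times (b : nat -> nat) (Delta i : nat) : seq nat :=
  iota (b i.-1 + Delta).+1 (b i - (b i.-1 + Delta)).

Definition rb_def_times (V : finType) (G : nat -> {set {set V}}) T k b Delta i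
  : seq nat := [seq tau <- roundabout_times b Delta i | deficient T k (G tau)].

Definition epoch_H (V : finType) (G : nat -> {set {set V}}) T k b Delta i
  : nat -> {set {set V}} :=
  fun tau => G (nth 0 (rb_def_times G T k b Delta i) tau.-1).

From HB Require Import structures.
From mathcomp Require Import all_boot order zify.

Set Implicit Arguments.
Unset Strict Implicit.
Unset Printing Implicit Defensive.

(* Throughout the roundabout process every state is visited by some active
   agent: pruning only removes an agent whose visited states are visited by
   the remaining ones, and an agent's visited arc [[a, s_a]] only grows while
   fewer than N steps have passed (here t < N).  Given I = [[m_j, m_j+1[[,
   take an active agent whose arc contains the last state of I.  Its start is
   one of the m's, so it does not lie strictly inside I, and an arc starting
   outside the interior of I that reaches the last state of I contains I. *)

Section CircularIntervals.
Variable N : nat.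

Definition cdist (a x : nat) : nat := (x + N - a) %% N.

Definition cpred (x : nat) : nat := if x == 1 then N else x.-1.

Lemma modn_lt2N y : y < 2 * N -> y %% N = if y < N then y else y - N.
Proof.
case: (ltnP y N) => [y_lt _ | y_ge y_lt]; first exact: modn_small.
by rewrite -{1}(subnK y_ge) modnDr modn_small //; lia.
Qed.

Lemma cint_shift a m x : 1 <= a <= N -> m < N ->
  cint N a ((a - 1 + m) %% N + 1) x = (1 <= x <= N) && (cdist a x <= m).
Proof.
move=> a_rng m_lt; rewrite /cint /cdist.
case: (boolP (1 <= x <= N)) => //= x_rng.
by rewrite !modn_lt2N; [repeat case: ifP; lia | lia | lia].
Qed.

Lemma cinto_sub_cint a s m m' x : 1 <= a <= N -> 1 <= m' <= N ->
  (cinto N m m' a -> a = m) -> cint N a s (cpred m') ->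
  cinto N m m' x -> cint N a s x.
Proof.
rewrite /cinto /cint /cpred => a_rng m'_rng.
by case: eqP => [m'_eq1 | m'_neq1]; repeat case: ifP; lia.
Qed.

End CircularIntervals.

Lemma sorted_cyclic_gap (s : seq nat) N j (z : nat) :
  sorted ltn s -> j < size s -> z \in s ->
  cinto N (nth 0 s j) (nth 0 s (j.+1 %% size s)) z -> z = nth 0 s j.
Proof.
move=> s_sorted j_lt z_in.
have [k k_lt ->] : exists2 k, k < size s & z = nth 0 s k.
  by case/(nthP 0): z_in => k k_lt <-; exists k.
have lt_nth p q : p < size s -> q < size s -> (nth 0 s p < nth 0 s q) = (p < q).
  by move=> p_lt q_lt; exact: (Order.POrderTheory.lt_sorted_ltn_nth 0 s_sorted).
move=> z_gap; congr nth; move: z_gap.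
have := lt_nth j k j_lt k_lt; have := lt_nth k j k_lt j_lt.
rewrite /cinto /cint; have [j1_lt | j1_eq] : j.+1 < size s \/ j.+1 = size s by lia.
- rewrite modn_small //.
  have := lt_nth k j.+1 k_lt j1_lt; have := lt_nth j j.+1 j_lt j1_lt.
  by case: ifP; lia.
- have s_gt0 : 0 < size s by lia.
  rewrite j1_eq modnn.
  have := lt_nth k 0 k_lt s_gt0; have := lt_nth j 0 j_lt s_gt0.
  have := lt_nth 0 j s_gt0 j_lt.
  by case: ifP; lia.
Qed.

Lemma prune_sub D A B : prune D A B -> forall a, B a -> A a.
Proof.
elim=> {A B} [A B _ BE | A B a _ _ _ IH] b; first by rewrite BE.
by move/IH/andP=> [].
Qed.

Lemma prune_covered D A B x :
  prune D A B -> (exists2 a, A a & D a x) -> exists2 a, B a & D a x.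
Proof.
elim=> {A B} [A B _ BE | A B a _ a_rem _ IH] [b Ab Dbx].
  by exists b; rewrite ?BE.
apply: IH; case: (eqVneq b a) => [ba | b_neq_a]; last by exists b; rewrite ?Ab.
rewrite ba in Dbx; have [c [Ac [c_neq_a Dcx]]] := a_rem x Dbx.
by exists c => //; rewrite Ac; exact/eqP.
Qed.

Section Roundabout.
Variables (V : finType) (N : nat) (e : nat -> {set V}) (H : nat -> {set {set V}}).

Fixpoint moves (a tau : nat) : nat :=
  if tau is tau'.+1 then moves a tau' + (e (rpos N e H a tau') \in H tau)
  else 0.

Lemma moves_le a tau : moves a tau <= tau.
Proof. by elim: tau => //= tau IH; case: (_ \in _); lia. Qed.

Lemma rposE a tau : 1 <= a <= N ->
  rpos N e H a tau = (a - 1 + moves a tau) %% N + 1.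
Proof.
move=> a_rng; elim: tau => [|tau IH] /=; first by rewrite addn0 modn_small; lia.
rewrite IH; case: (_ \in _); last by rewrite addn0.
by rewrite modnDml addnA.
Qed.

Lemma visitedE a tau x : 1 <= a <= N -> tau < N ->
  visited N e H a tau x = (1 <= x <= N) && (cdist N a x <= moves a tau).
Proof.
move=> a_rng tau_lt; rewrite /visited rposE // cint_shift //.
exact: leq_ltn_trans (moves_le a tau) tau_lt.
Qed.

Lemma visitedS a tau x : 1 <= a <= N -> tau.+1 < N ->
  visited N e H a tau x -> visited N e H a tau.+1 x.
Proof.
move=> a_rng tau_lt; rewrite !visitedE //; last exact: ltnW.
by move=> /andP[-> ?] /=; apply: leq_trans (leq_addr _ _).
Qed.

Variables (t : nat) (Aset : nat -> pred nat).
Hypothesis run : roundabout_run N e H t Aset.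

Lemma run_active_range tau a : tau <= t -> Aset tau a -> 1 <= a <= N.
Proof.
case: run => A0 A_prune; elim: tau a => [|tau IH] a tau_lt; first by rewrite A0.
by move/(prune_sub (A_prune tau.+1 tau_lt)); apply: IH; apply: ltnW.
Qed.

Lemma run_covered tau x : t < N -> tau <= t -> 1 <= x <= N ->
  exists2 a, Aset tau a & visited N e H a tau x.
Proof.
case: run => A0 A_prune t_lt; elim: tau => [_ x_rng | tau IH tau_lt x_rng].
  by exists x; rewrite ?A0 // /visited /= /cint leqnn x_rng.
have [a Aa Vax] := IH (ltnW tau_lt) x_rng.
apply: (prune_covered (A_prune tau.+1 tau_lt)).
exists a => //; apply: visitedS => //; last exact: leq_ltn_trans tau_lt t_lt.
exact: run_active_range (ltnW tau_lt) Aa.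
Qed.

End Roundabout.

Theorem lemma11 (V : finType) (n k Delta L : nat) (G : nat -> {set {set V}})
    (T : {set {set V}}) (r : V) (v : nat -> V) (rho : nat) (b : nat -> nat)
    (A : nat -> nat -> pred nat) :
  n = #|V| -> 2 <= n -> 1 <= k ->
  (forall tau, 1 <= tau <= L -> is_graph_edges (G tau)) ->
  spanning_tree (underlying G L) T ->
  let N := 2 * (n - 1) in
  let t := N %/ (2 * k) in
  dfs_tour T r v N ->
  is_rho k rho ->
  b 0 = 0 ->
  (forall i, 1 <= i <= rho -> b i.-1 <= b i) ->
  b rho <= L ->
  (forall i, 1 <= i <= rho ->
     Delta + t <= count (fun tau => deficient T k (G tau)) (epoch_times b i)) ->
  (forall i, 1 <= i <= rho -> t <= size (rb_def_times G T k b Delta i)) ->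
  (forall i, 1 <= i <= rho ->
     roundabout_run N (tour_edge v) (epoch_H G T k b Delta i) t (A i)) ->
  let ms := [seq x <- iota 1 N | has (fun i => A i t x) (iota 1 rho)] in
  let d := size ms in
  forall i, 1 <= i <= rho ->
  forall j, j < d ->
  exists a, A i t a /\
    (forall x, cinto N (nth 0 ms j) (nth 0 ms (j.+1 %% d)) x ->
       visited N (tour_edge v) (epoch_H G T k b Delta i) a t x).
Proof.
move=> _ n_ge2 k_ge1 _ _ N t _ _ _ _ _ _ _ run ms d i i_rng j j_lt.
have t_lt_N : t < N by apply: ltn_Pdiv; lia.
have ms_sorted : sorted ltn ms := sorted_filter ltn_trans _ (iota_ltn_sorted 1 N).
have ms_range z : z \in ms -> 1 <= z <= N by rewrite mem_filter mem_iota; lia.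
have active_range := run_active_range (run i i_rng).
have active_in_ms a : A i t a -> a \in ms.
  move=> Aa; rewrite mem_filter mem_iota (active_range _ _ (leqnn t) Aa) /= andbT.
  by apply/hasP; exists i; rewrite ?mem_iota //; lia.
set m' := nth 0 ms (j.+1 %% d).
have m'_range : 1 <= m' <= N by apply/ms_range/mem_nth/ltn_pmod; lia.
have last_range : 1 <= cpred N m' <= N by rewrite /cpred; case: eqP; lia.
have [a Aa a_visits] := run_covered (run i i_rng) t_lt_N (leqnn t) last_range.
exists a; split=> // x.
apply: cinto_sub_cint a_visits => //; first exact: active_range (leqnn t) Aa.
exact: sorted_cyclic_gap ms_sorted j_lt (active_in_ms a Aa).
Qed.
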